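(* Let $d\ge0$ and let $a\in\mathbb K[A]$ be a homogeneous, irreducible, isobaric element invariant under $UT_3$ (i.e. $D_1(a)=D_2(a)=D_3(a)=0$) with $\mathrm{ord}_1(a)=d$ and $\mathrm{ord}_2(a)=0$. Then: (i) the vector space $\bar B_d$ spanned by the elements $\frac{1}{d(d-1)\cdots(d-i-j+1)}\hat D_1^{i}\hat D_3^{j}(a)$, $i+j\le d$, is an irreducible $\mathfrak{sl}_3$-submodule of $\mathbb K[A]$ isomorphic to $\Gamma_{d,0}$; (ii) the element $$\sum_{i+j\le d}\frac{1}{i!\,j!}\,\hat D_1^{i}\hat D_3^{j}(a)\,x_1^{d-(i+j)}x_2^{i}x_3^{j}\in\mathbb K[A,x_1,x_2,x_3]$$ (the Casimir element of $\bar B_d$ and $S^d(\langle x_1,x_2,x_3\rangle)$ with respect to dual bases) is a covariant of order $d$ of the ternary form of degree $n$.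
   Context: $\mathbb K$ is a field of characteristic $0$, $n\ge1$, $\mathbb K[A]=\mathbb K[a_{i,j}: i,j\ge0,\ i+j\le n]$ is the coordinate ring of the space of ternary forms $\sum_{i+j\le n}\frac{n!}{i!j!(n-i-j)!}a_{i,j}x_1^{n-i-j}x_2^ix_3^j$. $\mathfrak{sl}_3$ acts by derivations on $\mathbb K[A,x_1,x_2,x_3]$; the operators for $E_{12},E_{23},E_{13},E_{21},E_{32},E_{31},E_{11}-E_{22},E_{22}-E_{33}$ are $D_1,D_2,D_3,\hat D_1,\hat D_2,\hat D_3,E_1,E_2$, acting on the $x$'s by $D_1=-x_2\partial_{x_1}$, $D_2=-x_3\partial_{x_2}$, $D_3=-x_3\partial_{x_1}$, $\hat D_1=-x_1\partial_{x_2}$, $\hat D_2=-x_2\partial_{x_3}$, $\hat D_3=-x_1\partial_{x_3}$, $E_1=x_2\partial_{x_2}-x_1\partial_{x_1}$, $E_2=x_3\partial_{x_3}-x_2\partial_{x_2}$, and on generators of $\mathbb K[A]$ (with $a_{i,j}=0$ if an index is negative or $i+j>n$) by $D_1(a_{i,j})=i a_{i-1,j}$, $D_2(a_{i,j})=j a_{i+1,j-1}$, $D_3(a_{i,j})=j a_{i,j-1}$, $\hat D_1(a_{i,j})=(n-i-j)a_{i+1,j}$, $\hat D_2(a_{i,j})=i a_{i-1,j+1}$, $\hat D_3(a_{i,j})=(n-i-j)a_{i,j+1}$, $E_1(a_{i,j})=(n-2i-j)a_{i,j}$, $E_2(a_{i,j})=(i-j)a_{i,j}$. Isobaric means an eigenvector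 of both $E_1$ and $E_2$. $\mathrm{ord}_i(a)=\max\{s\ge0:\hat D_i^s(a)\ne0\}$ ($i=1,2$). ''Irreducible'' element of the invariant ring $\mathbb K[A]^{UT_3}$ is used in the classical sense (nonzero, not a polynomial in $UT_3$-invariants of smaller degree). A covariant of order $d$ is an element of $\mathbb K[A,x_1,x_2,x_3]$ homogeneous of degree $d$ in the $x$'s and annihilated by all the derivations above (equivalently $SL_3$-invariant). $\Gamma_{m_1,m_2}$ denotes the irreducible finite-dimensional $\mathfrak{sl}_3$-module of highest weight $[m_1,m_2]$. *)

From HB Require Import structures.
From mathcomp Require Import all_boot all_algebra.
From mathcomp Require Import mpoly.

Set Implicit Arguments.
Unset Strict Implicit.
Unset Printing Implicit Defensive.

Import GRing.Theory.
Local Open Scope ring_scope.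

Section TernaryForms.
Variables (K : fieldType) (n : nat).

Local Notation Idx := {ij : 'I_n.+1 * 'I_n.+1 | (ij.1 + ij.2 <= n)%N}.

Definition NA : nat := #|{: Idx}|.

(* K[A] = K[a_{i,j} : i + j <= n] *)
Definition KA := {mpoly K[NA]}.
(* K[A, x1, x2, x3] = K[A][x1, x2, x3]; x1 = 'X_0, x2 = 'X_1, x3 = 'X_2. *)
Definition KAx := {mpoly KA[3]}.

Definition aidx (i j : nat) : option 'I_NA :=
  if (i + j <= n)%N then
    omap (@enum_rank Idx) (insub ((inord i, inord j) : 'I_n.+1 * 'I_n.+1))
  else None.

(* the generator a_{i,j}, with the convention a_{i,j} = 0 if i + j > n *)
Definition avar (i j : nat) : KA :=
  if aidx i j is Some k then 'X_k else 0.

Definition ia (k : 'I_NA) : nat := val (val (enum_val k)).1.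
Definition ja (k : 'I_NA) : nat := val (val (enum_val k)).2.

Definition derA (f : nat -> nat -> KA) (p : KA) : KA :=
  \sum_(k < NA) mderiv k p * f (ia k) (ja k).

(* Values on generators.  Negative indices only occur with coefficient 0
   (natural-number truncation is harmless there). *)
Definition gD1 (i j : nat) : KA := i%:R * avar i.-1 j.
Definition gD2 (i j : nat) : KA := j%:R * avar i.+1 j.-1.
Definition gD3 (i j : nat) : KA := j%:R * avar i j.-1.
Definition gH1 (i j : nat) : KA := (n - (i + j))%:R * avar i.+1 j.
Definition gH2 (i j : nat) : KA := i%:R * avar i.-1 j.+1.
Definition gH3 (i j : nat) : KA := (n - (i + j))%:R * avar i j.+1.
Definition gE1 (i j : nat) : KA := ((n%:Z - 2 * i%:Z - j%:Z)%:~R) * avar i j.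
Definition gE2 (i j : nat) : KA := ((i%:Z - j%:Z)%:~R) * avar i j.

Definition D1 := derA gD1.
Definition D2 := derA gD2.
Definition D3 := derA gD3.
Definition hD1 := derA gH1.
Definition hD2 := derA gH2.
Definition hD3 := derA gH3.
Definition E1 := derA gE1.
Definition E2 := derA gE2.

Definition x1 : KAx := 'X_(@Ordinal 3 0 isT).
Definition x2 : KAx := 'X_(@Ordinal 3 1 isT).
Definition x3 : KAx := 'X_(@Ordinal 3 2 isT).

Definition derAx (f : nat -> nat -> KA) (g : 'I_3 -> KAx) (P : KAx) : KAx :=
  \sum_(m <- msupp P) (derA f P@_m *: 'X_[m])
  + \sum_(l < 3) mderiv l P * g l.

(* actions on x's:
   D1 = -x2 d/dx1, D2 = -x3 d/dx2, D3 = -x3 d/dx1,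
   hD1 = -x1 d/dx2, hD2 = -x2 d/dx3, hD3 = -x1 d/dx3,
   E1 = x2 d/dx2 - x1 d/dx1, E2 = x3 d/dx3 - x2 d/dx2 *)
Definition xv (v1 v2 v3 : KAx) (l : 'I_3) : KAx :=
  match val l with 0 => v1 | 1 => v2 | _ => v3 end.

Definition D1x := derAx gD1 (xv (- x2) 0 0).
Definition D2x := derAx gD2 (xv 0 (- x3) 0).
Definition D3x := derAx gD3 (xv (- x3) 0 0).
Definition hD1x := derAx gH1 (xv 0 (- x1) 0).
Definition hD2x := derAx gH2 (xv 0 0 (- x2)).
Definition hD3x := derAx gH3 (xv 0 0 (- x1)).
Definition E1x := derAx gE1 (xv (- x1) x2 0).
Definition E2x := derAx gE2 (xv 0 (- x2) x3).

Definition UTinv (p : KA) : Prop := D1 p = 0 /\ D2 p = 0 /\ D3 p = 0.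

Definition isobaric (p : KA) : Prop :=
  p != 0 /\ exists l1 l2 : K, E1 p = l1 *: p /\ E2 p = l2 *: p.

Definition has_ord (D : KA -> KA) (p : KA) (s : nat) : Prop :=
  iter s D p != 0 /\ forall t, (s < t)%N -> iter t D p = 0.

(* irreducible element of K[A]^{UT_3} in the classical sense: nonzero and not a
   polynomial in UT_3-invariants of smaller (total) degree.
   (msize p = 1 + total degree of p, for p <> 0.) *)
Definition UTirred (p : KA) : Prop :=
  p != 0 /\
  ~ (exists (m : nat) (Q : {mpoly K[m]}) (g : 'I_m -> KA),
        (forall k, UTinv (g k) /\ (msize (g k) < msize p)%N) /\ p = mmap (@mpolyC NA K) g Q).

Definition submod (V : KA -> Prop) : Prop :=
  V 0 /\ (forall u v, V u -> V v -> V (u + v)) /\ (forall (c : K) v, V v -> V (c *: v)) /\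
  (forall v, V v -> V (D1 v) /\ V (D2 v) /\ V (D3 v) /\ V (hD1 v) /\ V (hD2 v) /\
                   V (hD3 v) /\ V (E1 v) /\ V (E2 v)).

Definition irred_submod (V : KA -> Prop) : Prop :=
  submod V /\ (exists v, V v /\ v != 0) /\
  forall W : KA -> Prop, submod W -> (forall w, W w -> V w) ->
     (forall w, W w -> w = 0) \/ (forall v, V v -> W v).

(* V is a (finite-dimensional) irreducible sl_3-submodule isomorphic to
   Gamma_{m1,m2}, the irreducible module of highest weight [m1,m2]: it has a
   highest weight vector (killed by E12, E23, E13) of weight [m1,m2]. *)
Definition iso_Gamma (V : KA -> Prop) (m1 m2 : nat) : Prop :=
  irred_submod V /\
  (exists s : seq KA, forall p, V p <-> exists c : 'I_(size s) -> K,
                                        p = \sum_(i < size s) c i *: s`_i) /\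
  exists v, [/\ V v, v != 0, UTinv v, E1 v = m1%:R *: v & E2 v = m2%:R *: v].

Definition Bbar (a : KA) (d : nat) (p : KA) : Prop :=
  exists c : nat -> nat -> K,
    p = \sum_(i < d.+1) \sum_(j < d.+1 | (i + j <= d)%N)
          c i j *: (((d ^_ (i + j))%:R)^-1 *: iter i hD1 (iter j hD3 a)).

Definition casimir (a : KA) (d : nat) : KAx :=
  \sum_(i < d.+1) \sum_(j < d.+1 | (i + j <= d)%N)
     ((((i`! * j`!)%:R)^-1 : K) *: iter i hD1 (iter j hD3 a))
        *: (x1 ^+ (d - (i + j)) * x2 ^+ i * x3 ^+ j).

Definition covariant (d : nat) (P : KAx) : Prop :=
  P \is d.-homog /\
  (D1x P = 0 /\ D2x P = 0 /\ D3x P = 0 /\ hD1x P = 0 /\ hD2x P = 0 /\ hD3x P = 0 /\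
   E1x P = 0 /\ E2x P = 0).

End TernaryForms.

(* The element a is a highest weight vector for sl_3: the raising operators
   D1, D2, D3 kill it, E2 a = [D2, hD2] a = 0 because hD2 a = 0, and the sl_2
   triple (D1, hD1, E1) together with hD1^(d+1) a = 0 <> hD1^d a forces
   E1 a = d a.  The commutation relations of sl_3 then give each of the eight
   operators on the vectors hD1^i hD3^j a explicitly; these vectors vanish for
   i + j > d, so they span a submodule, and it is irreducible because applying
   D1^s D3^t to a nonzero element, at one of its terms with s + t maximal,
   recovers a nonzero multiple of a.  Normalised by 1 / (i! j!), the same
   formulas say, coefficient by coefficient, that the extended operators
   annihilate the Casimir element. *)

From HB Require Import structures.
From mathcomp Require Import all_boot all_algebra.
From mathcomp Require Import mpoly.
From mathcomp Require Import ring zify.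
From Stdlib Require Import Classical.

Set Implicit Arguments.
Unset Strict Implicit.
Unset Printing Implicit Defensive.

Import GRing.Theory.
Local Open Scope ring_scope.

(** * Iterates of endomorphisms and sl_2 *)

Lemma iter_is_linear (R : pzRingType) (V : lmodType R) (X : {linear V -> V}) k :
  linear (iter k X).
Proof. by elim: k => [|k IH] c p q //=; rewrite IH linearP. Qed.

HB.instance Definition _ (R : pzRingType) (V : lmodType R) (X : {linear V -> V}) k :=
  GRing.isLinear.Build R V V _ (iter k X) (iter_is_linear X k).

Lemma iter_commute (T : Type) (X Y : T -> T) :
  (forall p, Y (X p) = X (Y p)) -> forall k p, Y (iter k X p) = iter k X (Y p).
Proof. by move=> YX; elim=> //= k IH p; rewrite YX IH. Qed.

Section IteratedEndomorphisms.
Variables (R : comNzRingType) (V : lmodType R) (X : {linear V -> V}).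

Lemma iter_central_commutator (Y Z : V -> V) :
    (forall p, Y (X p) = X (Y p) + Z p) -> (forall p, Z (X p) = X (Z p)) ->
  forall k p, Y (iter k X p) = iter k X (Y p) + iter k.-1 X (Z p) *+ k.
Proof.
move=> YX ZX; elim=> [|k IH] p /=; first by rewrite mulr0n addr0.
rewrite YX IH linearD raddfMn (iter_commute ZX).
by case: k {IH} => [|k] /=; rewrite ?mulr0n ?addr0 // -addrA -mulrSr.
Qed.

Lemma iter_weight (H : V -> V) (c lam : R) p :
    (forall q, H (X q) = X (H q) + c *: X q) -> H p = lam *: p ->
  forall k, H (iter k X p) = (lam + k%:R * c) *: iter k X p.
Proof.
move=> HX Hp; elim=> [|k IH] /=; first by rewrite mul0r addr0.
by rewrite HX IH linearZ -scalerDl mulrSr mulrDl mul1r addrA.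
Qed.

Lemma iter_highest_weight (Y H : V -> V) (lam : R) p :
    (forall q, Y (X q) = X (Y q) + H q) ->
    (forall q, H (X q) = X (H q) + (-2) *: X q) -> Y p = 0 -> H p = lam *: p ->
  forall k, Y (iter k X p) = (k%:R * (lam - k%:R + 1)) *: iter k.-1 X p.
Proof.
move=> YX HX Yp Hp; elim=> [|k IH] /=; first by rewrite Yp mul0r scale0r.
rewrite YX IH (iter_weight HX Hp) linearZ.
case: k {IH} => [|k] /=; first by rewrite !mul0r scale0r add0r; congr (_ *: _); ring.
by rewrite -scalerDl; congr (_ *: _); ring.
Qed.

End IteratedEndomorphisms.

Section SeqSpan.
Variables (R : pzRingType) (V : lmodType R) (s : seq V).

Definition seq_span (v : V) :=
  exists c : 'I_(size s) -> R, v = \sum_(k < size s) c k *: s`_k.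

Lemma seq_span0 : seq_span 0.
Proof. by exists (fun _ => 0); rewrite big1 // => k _; rewrite scale0r. Qed.

Lemma seq_spanD u v : seq_span u -> seq_span v -> seq_span (u + v).
Proof.
move=> [cu ->] [cv ->]; exists (fun k => cu k + cv k).
by rewrite -big_split; apply: eq_bigr => k _; rewrite scalerDl.
Qed.

Lemma seq_spanZ r v : seq_span v -> seq_span (r *: v).
Proof.
move=> [c ->]; exists (fun k => r * c k).
by rewrite scaler_sumr; apply: eq_bigr => k _; rewrite scalerA.
Qed.

Lemma seq_span_mem v : v \in s -> seq_span v.
Proof.
move=> vs; have vs_lt : (index v s < size s)%N by rewrite index_mem.
exists (fun k => (k == Ordinal vs_lt)%:R).
rewrite (bigD1 (Ordinal vs_lt)) //= eqxx scale1r nth_index // big1 ?addr0 //.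
by move=> k /negbTE->; rewrite scale0r.
Qed.

End SeqSpan.

Lemma sum_triangle1 (V : nmodType) d (G : nat -> nat -> V) i0 j0 :
    (i0 + j0 <= d)%N -> (forall i j, (i + j <= d)%N -> (i, j) != (i0, j0) -> G i j = 0) ->
  \sum_(i < d.+1) \sum_(j < d.+1 | (i + j <= d)%N) G i j = G i0 j0.
Proof.
move=> ij0d G0; have i0d : (i0 < d.+1)%N by lia.
have j0d : (j0 < d.+1)%N by lia.
rewrite (bigD1 (Ordinal i0d)) //= (bigD1 (Ordinal j0d)) //= big1 ?addr0; last first.
  by move=> j /andP[ijd jj0]; apply: G0 => //; rewrite xpair_eqE negb_and jj0 orbT.
rewrite big1 ?addr0 // => i ii0; apply: big1 => j ijd.
by apply: G0 => //; rewrite xpair_eqE negb_and ii0.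
Qed.

Local Notation o0 := (@Ordinal 3 0 isT).
Local Notation o1 := (@Ordinal 3 1 isT).
Local Notation o2 := (@Ordinal 3 2 isT).

Lemma big_ord3 (R : Type) (idx : R) (op : Monoid.law idx) (F : 'I_3 -> R) :
  \big[op/idx]_(l < 3) F l = op (op (F o0) (F o1)) (F o2).
Proof.
rewrite !big_ord_recr big_ord0 Monoid.mul1m /=.
by congr (op (op (F _) (F _)) (F _)); apply: val_inj.
Qed.

Lemma mnm3_eqE (m : 'X_{1..3}) x y z :
  ((U_(o0) *+ x + U_(o1) *+ y + U_(o2) *+ z)%MM == m) =
  [&& m o0 == x, m o1 == y & m o2 == z].
Proof.
apply/eqP/and3P => [<-|[/eqP m0 /eqP m1 /eqP m2]].
  by rewrite !mnmDE !mulmnE !mnm1E /= !mul0n !mul1n !addn0 add0n.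
apply/mnmP => -[[|[|[|i]]] i_lt] //; rewrite !mnmDE !mulmnE !mnm1E /=.
- by rewrite (_ : Ordinal i_lt = o0) ?m0 ?muln0 ?mul1n ?addn0 //; apply: val_inj.
- by rewrite (_ : Ordinal i_lt = o1) ?m1 ?muln0 ?mul1n ?addn0 ?add0n //; apply: val_inj.
- by rewrite (_ : Ordinal i_lt = o2) ?m2 ?muln0 ?mul1n ?add0n //; apply: val_inj.
Qed.

Lemma mcoeffMX1 (R : comNzRingType) (k : nat) (P : {mpoly R[k]}) (i : 'I_k) m :
  (P * 'X_i)@_m = if (0 < m i)%N then P@_(m - U_(i)) else 0.
Proof.
case: ifP => mi.
  have U_le : (U_(i) <= m)%MM by apply/mnm_lepP => l; rewrite mnm1E; case: eqP => // <-.
  by rewrite -{1}(submK U_le) addmC mcoeffMX.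
apply: memN_msupp_eq0; rewrite (perm_mem (msuppMX P U_(i))).
by apply/mapP => -[m' _ m_def]; move: mi; rewrite m_def mnmDE mnm1E eqxx add1n.
Qed.

Lemma mcoeff_mderivMX (R : comNzRingType) (k : nat) (P : {mpoly R[k]}) (l i : 'I_k) m :
  (mderiv l P * 'X_i)@_m =
  if (0 < m i)%N then P@_(m - U_(i) + U_(l))%MM *+ ((m - U_(i))%MM l).+1 else 0.
Proof. by rewrite mcoeffMX1 mcoeff_deriv. Qed.

Lemma mcoeff_mderivMX_diag (R : comNzRingType) (k : nat) (P : {mpoly R[k]}) (i : 'I_k) m :
  (mderiv i P * 'X_i)@_m = P@_m *+ m i.
Proof.
rewrite mcoeff_mderivMX; case: ifPn => [mi|]; last by rewrite -eqn0Ngt => /eqP->.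
have U_le : (U_(i) <= m)%MM by apply/mnm_lepP => l; rewrite mnm1E; case: eqP => // <-.
by rewrite submK // mnmBE mnm1E eqxx subn1 prednK.
Qed.

(** * Derivations of K[A] and the relations of sl_3 *)

Lemma derA_is_linear (K : fieldType) (n : nat) (f : nat -> nat -> KA K n) :
  linear (derA f).
Proof.
move=> c p q; rewrite /derA scaler_sumr -big_split /=; apply: eq_bigr => k _.
by rewrite mderivD mderivZ mulrDl scalerAl.
Qed.

HB.instance Definition _ (K : fieldType) (n : nat) f :=
  GRing.isLinear.Build K (KA K n) (KA K n) _ (derA f) (derA_is_linear f).
(* Instance inference does not unfold D1, ..., E2 to derA, so each needs its own. *)
HB.instance Definition _ K n := GRing.Linear.copy (@D1 K n) (derA (gD1 K n)).
HB.instance Definition _ K n := GRing.Linear.copy (@D2 K n) (derA (gD2 K n)).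
HB.instance Definition _ K n := GRing.Linear.copy (@D3 K n) (derA (gD3 K n)).
HB.instance Definition _ K n := GRing.Linear.copy (@hD1 K n) (derA (gH1 K n)).
HB.instance Definition _ K n := GRing.Linear.copy (@hD2 K n) (derA (gH2 K n)).
HB.instance Definition _ K n := GRing.Linear.copy (@hD3 K n) (derA (gH3 K n)).
HB.instance Definition _ K n := GRing.Linear.copy (@E1 K n) (derA (gE1 K n)).
HB.instance Definition _ K n := GRing.Linear.copy (@E2 K n) (derA (gE2 K n)).

Section Derivations.
Variables (K : fieldType) (n : nat).
Local Notation KA := (KA K n).
Implicit Types (f g h : nat -> nat -> KA) (p q : KA).

Lemma derAM f p q : derA f (p * q) = derA f p * q + p * derA f q.
Proof.
rewrite /derA mulr_suml mulr_sumr -big_split /=; apply: eq_bigr => k _.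
by rewrite mderivM; ring.
Qed.

Lemma derAC f (c : K) : derA f c%:MP = 0.
Proof. by rewrite /derA big1 // => k _; rewrite mderivC mul0r. Qed.

Lemma derA_natrM f (k : nat) p : derA f (k%:R * p) = k%:R * derA f p.
Proof. by rewrite derAM -(rmorph_nat (@mpolyC _ K)) derAC mul0r add0r. Qed.

Lemma derA_intrM f (z : int) p : derA f (z%:~R * p) = z%:~R * derA f p.
Proof. by rewrite derAM -(rmorph_int (@mpolyC _ K)) derAC mul0r add0r. Qed.

Lemma derA_fun0 p : derA (fun _ _ => 0) p = 0.
Proof. by rewrite /derA big1 // => k _; rewrite mulr0. Qed.

Lemma derA_funN g p : derA (fun i j => - g i j) p = - derA g p.
Proof. by rewrite /derA -sumrN; apply: eq_bigr => k _; rewrite mulrN. Qed.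

Lemma derA_funD g g' p :
  derA (fun i j => g i j + g' i j) p = derA g p + derA g' p.
Proof. by rewrite /derA -big_split; apply: eq_bigr => k _; rewrite mulrDr. Qed.

Lemma derA_funMn g k p : derA (fun i j => g i j *+ k) p = derA g p *+ k.
Proof. by rewrite /derA -sumrMnl; apply: eq_bigr => l _; rewrite mulrnAr. Qed.

Lemma derA_X f k : derA f 'X_k = f (ia k) (ja k).
Proof.
rewrite /derA (bigD1 k) //= big1 ?addr0.
  rewrite mderivX mnm1E eqxx.
  have -> : (U_(k) - U_(k))%MM = 0%MM by apply/mnmP => i; rewrite !mnmE subnn.
  by rewrite mpolyX0 scale1r mul1r.
by move=> l /negbTE lk; rewrite mderivX mnm1E eq_sym lk scale0r mul0r.
Qed.

Lemma ia_ja_le (k : 'I_(NA n)) : (ia k + ja k <= n)%N.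
Proof. exact: (valP (enum_val k)). Qed.

Lemma avar_out i j : ~~ (i + j <= n)%N -> avar K n i j = 0.
Proof. by move=> ijn; rewrite /avar /aidx (negbTE ijn). Qed.

Lemma avar_in i j :
  (i + j <= n)%N -> exists k, [/\ avar K n i j = 'X_k, ia k = i & ja k = j].
Proof.
move=> ijn; pose x : 'I_n.+1 * 'I_n.+1 := (inord i, inord j).
have xn : (x.1 + x.2 <= n)%N by rewrite /= !inordK //; lia.
exists (enum_rank (exist _ x xn : {ij : 'I_n.+1 * 'I_n.+1 | (ij.1 + ij.2 <= n)%N})).
by rewrite /avar /aidx /ia /ja ijn insubT !enum_rankK /= !inordK //; lia.
Qed.

Lemma derA_avar f i j :
  derA f (avar K n i j) = if (i + j <= n)%N then f i j else 0.
Proof.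
case: ifP => ijn; last by rewrite avar_out ?ijn // raddf0.
by have [k [-> <- <-]] := avar_in ijn; rewrite derA_X.
Qed.

(* The second-order parts of the two composites agree because partial
   derivatives commute. *)
Lemma derA_commutator f g h :
    (forall i j, (i + j <= n)%N -> derA f (g i j) - derA g (f i j) = h i j) ->
  forall p, derA f (derA g p) = derA g (derA f p) + derA h p.
Proof.
move=> fgh p.
pose second f g := \sum_(k < NA n) \sum_(l < NA n)
  mderiv l (mderiv k p) * (f (ia l) (ja l) * g (ia k) (ja k)).
have derA_derA f' g' : derA f' (derA g' p) =
    second f' g' + \sum_(k < NA n) mderiv k p * derA f' (g' (ia k) (ja k)).
  rewrite [derA g' p]/derA raddf_sum -big_split /=; apply: eq_bigr => k _.
  rewrite derAM [derA f' (mderiv _ _)]/derA mulr_suml; congr (_ + _).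
  by apply: eq_bigr => l _; rewrite -!mulrA [X in _ * X]mulrC.
have second_sym : second f g = second g f.
  rewrite /second exchange_big /=; apply: eq_bigr => k _; apply: eq_bigr => l _.
  by rewrite mderiv_comm mulrC [g _ _ * _]mulrC (mulrC (mderiv _ _)).
rewrite !derA_derA second_sym -addrA; congr (_ + _).
apply/eqP; rewrite addrC -subr_eq; apply/eqP.
rewrite /derA -sumrB; apply: eq_bigr => k _.
by rewrite -mulrBr fgh // ia_ja_le.
Qed.

(* Checks a relation on the generators a_{i,j}: the boundary cases i = 0,
   j = 0 and i + j = n are separated, after which it is a ring identity. *)
Local Ltac check_on_generators :=
  let i := fresh "i" in let j := fresh "j" in
  move=> i j ?;
  rewrite /gD1 /gD2 /gD3 /gH1 /gH2 /gH3 /gE1 /gE2 ?derA_natrM ?derA_intrM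
          ?derA_avar /gD1 /gD2 /gD3 /gH1 /gH2 /gH3 /gE1 /gE2;
  (have [?|ijn] : (i + j < n)%N \/ (i + j = n)%N by lia);
  destruct i as [|i]; destruct j as [|j]; rewrite /=;
  repeat case: ifP => ?; try lia;
  repeat match goal with
  | |- context [((?a - ?b)%N)%:R] =>
      let e := fresh in
      first [ (have e : (b <= a)%N by lia); rewrite (natrB _ e); clear e
            | (have e : (a - b = 0)%N by lia); rewrite e; clear e ]
  end;
  try (match goal with ijn : (?s = n)%N |- _ =>
         let nR := fresh in let nZ := fresh in
         (have nR : (n%:R : KA) = s%:R by rewrite ijn);
         (have nZ : n%:Z = s%:Z by rewrite ijn);
         rewrite ?nR ?nZ end);
  ring.

Lemma hD1_hD3 p : hD1 (hD3 p) = hD3 (hD1 p).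
Proof.
rewrite -[RHS]addr0 -(derA_fun0 p).
by apply: derA_commutator; check_on_generators.
Qed.

Lemma hD2_hD1 p : hD2 (hD1 p) = hD1 (hD2 p) + hD3 p.
Proof. by apply: derA_commutator; check_on_generators. Qed.

Lemma hD2_hD3 p : hD2 (hD3 p) = hD3 (hD2 p).
Proof.
rewrite -[RHS]addr0 -(derA_fun0 p).
by apply: derA_commutator; check_on_generators.
Qed.

Lemma D1_hD1 p : D1 (hD1 p) = hD1 (D1 p) + E1 p.
Proof. by apply: derA_commutator; check_on_generators. Qed.

Lemma D1_hD3 p : D1 (hD3 p) = hD3 (D1 p) - hD2 p.
Proof. by rewrite -derA_funN; apply: derA_commutator; check_on_generators. Qed.

Lemma D2_hD1 p : D2 (hD1 p) = hD1 (D2 p).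
Proof.
rewrite -[RHS]addr0 -(derA_fun0 p).
by apply: derA_commutator; check_on_generators.
Qed.

Lemma D2_hD2 p : D2 (hD2 p) = hD2 (D2 p) + E2 p.
Proof. by apply: derA_commutator; check_on_generators. Qed.

Lemma D2_hD3 p : D2 (hD3 p) = hD3 (D2 p) + hD1 p.
Proof. by apply: derA_commutator; check_on_generators. Qed.

Lemma D3_hD1 p : D3 (hD1 p) = hD1 (D3 p) - D2 p.
Proof. by rewrite -derA_funN; apply: derA_commutator; check_on_generators. Qed.

Lemma D3_hD3 p : D3 (hD3 p) = hD3 (D3 p) + (E1 p + E2 p).
Proof. by rewrite -derA_funD; apply: derA_commutator; check_on_generators. Qed.

Lemma E1_hD1 p : E1 (hD1 p) = hD1 (E1 p) + (-2) *: hD1 p.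
Proof.
rewrite scaleNr scaler_nat -derA_funMn -derA_funN.
by apply: derA_commutator; check_on_generators.
Qed.

Lemma E1_hD3 p : E1 (hD3 p) = hD3 (E1 p) + (-1) *: hD3 p.
Proof. by rewrite scaleN1r -derA_funN; apply: derA_commutator; check_on_generators. Qed.

Lemma E2_hD1 p : E2 (hD1 p) = hD1 (E2 p) + 1 *: hD1 p.
Proof. by rewrite scale1r; apply: derA_commutator; check_on_generators. Qed.

Lemma E2_hD3 p : E2 (hD3 p) = hD3 (E2 p) + (-1) *: hD3 p.
Proof. by rewrite scaleN1r -derA_funN; apply: derA_commutator; check_on_generators. Qed.

End Derivations.

Lemma mcoeff_derAx (K : fieldType) (n : nat) f g (P : KAx K n) m :
  (derAx f g P)@_m = derA f P@_m + (\sum_(l < 3) mderiv l P * g l)@_m.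
Proof.
rewrite /derAx mcoeffD raddf_sum /=; congr (_ + _).
under eq_bigr do rewrite mcoeffZ mcoeffX mulr_natr mulrb.
rewrite -big_mkcond.
have [m_supp|m_supp] := boolP (m \in msupp P).
  by rewrite -big_filter filter_pred1_uniq ?msupp_uniq // big_seq1.
by rewrite big_hasC ?has_pred1 // memN_msupp_eq0 // raddf0.
Qed.

(** * The highest weight vector a *)

Section HighestWeightVector.
Variables (K : fieldType) (n d : nat) (a : KA K n) (lam : K).
Hypothesis charK0 : [pchar K] =i pred0.
Hypotheses (D1a : D1 a = 0) (D2a : D2 a = 0) (D3a : D3 a = 0) (hD2a : hD2 a = 0).
Hypothesis E1a_lam : E1 a = lam *: a.
Hypotheses (hD1a_ord : iter d (@hD1 K n) a != 0) (hD1a_ord1 : iter d.+1 (@hD1 K n) a = 0).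

Local Notation KA := (KA K n).

Lemma natr_neq0 k : (0 < k)%N -> (k%:R : K) != 0.
Proof. by move=> k_gt0; rewrite ((pcharf0P K).1 charK0 k) -lt0n. Qed.

Lemma pmulrn_eq0 k (p : KA) : (0 < k)%N -> p *+ k = 0 -> p = 0.
Proof.
by move=> k_gt0 /eqP; rewrite -scaler_nat scaler_eq0 (negbTE (natr_neq0 k_gt0)) => /eqP.
Qed.

Lemma E2a : E2 a = 0.
Proof. by move: (D2_hD2 a); rewrite hD2a D2a !raddf0 add0r. Qed.

Lemma E1a : E1 a = d%:R *: a.
Proof.
have := iter_highest_weight (D1_hD1 (n:=n)) (E1_hD1 (n:=n)) D1a E1a_lam d.+1.
rewrite hD1a_ord1 raddf0 /= => /esym/eqP.
rewrite scaler_eq0 (negbTE hD1a_ord) orbF mulf_eq0 (negbTE (natr_neq0 (ltn0Sn d))) /=.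
move=> /eqP lam_d; rewrite E1a_lam.
have -> : lam = (lam - d.+1%:R + 1) + d%:R by rewrite -natr1; ring.
by rewrite lam_d add0r.
Qed.

Definition hD13 i j := iter i (@hD1 K n) (iter j (@hD3 K n) a).
Arguments hD13 : simpl never.

Lemma hD1_hD13 i j : hD1 (hD13 i j) = hD13 i.+1 j.
Proof. by []. Qed.

Lemma hD3_hD13 i j : hD3 (hD13 i j) = hD13 i j.+1.
Proof. exact: (iter_commute (fun p => esym (hD1_hD3 p))). Qed.

Lemma hD2_hD13 i j : hD2 (hD13 i j) = hD13 i.-1 j.+1 *+ i.
Proof.
rewrite /hD13 (iter_central_commutator (hD2_hD1 (n:=n)) (fun p => esym (hD1_hD3 p))).
by rewrite (iter_commute (hD2_hD3 (n:=n))) hD2a !raddf0 add0r.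
Qed.

Lemma E1_hD3a j : E1 (iter j (@hD3 K n) a) = (d%:R - j%:R) *: iter j (@hD3 K n) a.
Proof. by rewrite (iter_weight (E1_hD3 (n:=n)) E1a); congr (_ *: _); ring. Qed.

Lemma E1_hD13 i j : E1 (hD13 i j) = (d%:R - j%:R - i%:R *+ 2) *: hD13 i j.
Proof.
rewrite [LHS](iter_weight (E1_hD1 (n:=n)) (E1_hD3a j)).
by congr (_ *: _); ring.
Qed.

Lemma E2_hD13 i j : E2 (hD13 i j) = (i%:R - j%:R) *: hD13 i j.
Proof.
have E2a' : E2 a = 0 *: a by rewrite E2a scale0r.
rewrite [LHS](iter_weight (E2_hD1 (n:=n)) (iter_weight (E2_hD3 (n:=n)) E2a' j)).
by congr (_ *: _); ring.
Qed.

Lemma D1_hD3a j : D1 (iter j (@hD3 K n) a) = 0.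
Proof.
have hD2_hD3N (p : KA) : - hD2 (hD3 p) = hD3 (- hD2 p) by rewrite hD2_hD3 raddfN.
rewrite (iter_central_commutator (D1_hD3 (n:=n)) hD2_hD3N).
by rewrite D1a hD2a oppr0 !raddf0 add0r mul0rn.
Qed.

Lemma D2_hD3a j : D2 (iter j (@hD3 K n) a) = hD1 (iter j.-1 (@hD3 K n) a) *+ j.
Proof.
rewrite (iter_central_commutator (D2_hD3 (n:=n)) (hD1_hD3 (n:=n))) D2a raddf0 add0r.
by rewrite (iter_commute (hD1_hD3 (n:=n))).
Qed.

Lemma D2_hD13 i j : D2 (hD13 i j) = hD13 i.+1 j.-1 *+ j.
Proof.
by rewrite /hD13 (iter_commute (D2_hD1 (n:=n))) D2_hD3a raddfMn /= -iterSr.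
Qed.

Lemma D3_hD3a j :
  D3 (iter j (@hD3 K n) a) = (j%:R * (d%:R - j%:R + 1)) *: iter j.-1 (@hD3 K n) a.
Proof.
have E12_hD3 (p : KA) : E1 (hD3 p) + E2 (hD3 p) = hD3 (E1 p + E2 p) + (-2) *: hD3 p.
  by rewrite E1_hD3 E2_hD3 raddfD addrACA -scalerDl; congr (_ + (_ *: _)); ring.
have E12a : E1 a + E2 a = (d%:R + 0) *: a by rewrite E1a E2a addr0 addr0.
rewrite (iter_highest_weight (D3_hD3 (n:=n)) E12_hD3 D3a E12a).
by congr (_ *: _); ring.
Qed.

Lemma hD13_top j : (j <= d.+1)%N -> hD13 (d.+1 - j) j = 0.
Proof.
elim: j => [|j IH] jd; first by rewrite subn0.
have := hD2_hD13 (d.+1 - j) j; rewrite IH ?raddf0; last by lia.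
rewrite (_ : (d.+1 - j).-1 = d.+1 - j.+1)%N; last by lia.
by move/esym/pmulrn_eq0; apply; lia.
Qed.

Lemma hD13_eq0 i j : (d < i + j)%N -> hD13 i j = 0.
Proof.
move=> dij; have [k ijk] : exists k, (i + j = d.+1 + k)%N by exists (i + j - d.+1)%N; lia.
elim: k i j ijk {dij} => [|k IH] i j ijk.
  by rewrite (_ : i = d.+1 - j)%N ?hD13_top //; lia.
case: i ijk => [|i] ijk; last by rewrite -hD1_hD13 IH ?raddf0 //; lia.
case: j ijk => [|j] ijk; first by lia.
by rewrite -hD3_hD13 IH ?raddf0 //; lia.
Qed.

Lemma D1_hD13 i j : D1 (hD13 i j) = (i * (d.+1 - (i + j)))%:R *: hD13 i.-1 j.
Proof.
have [ijd|dij] := leqP (i + j) d; last first.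
  by rewrite hD13_eq0 // raddf0 (_ : d.+1 - _ = 0)%N ?muln0 ?scale0r //; lia.
rewrite (iter_highest_weight (D1_hD1 (n:=n)) (E1_hD1 (n:=n)) (D1_hD3a j) (E1_hD3a j)).
by rewrite natrM natrB ?natrD ?(leqW ijd) //; congr (_ *: _); ring.
Qed.

Lemma D3_hD13 i j : D3 (hD13 i j) = (j * (d.+1 - (i + j)))%:R *: hD13 i j.-1.
Proof.
have [ijd|dij] := leqP (i + j) d; last first.
  by rewrite hD13_eq0 // raddf0 (_ : d.+1 - _ = 0)%N ?muln0 ?scale0r //; lia.
have D2_hD1N (p : KA) : - D2 (hD1 p) = hD1 (- D2 p) by rewrite D2_hD1 raddfN.
rewrite /hD13 (iter_central_commutator (D3_hD1 (n:=n)) D2_hD1N) D3_hD3a D2_hD3a.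
rewrite natrM natrB ?natrD ?(leqW ijd) //.
case: i {ijd} => [|i] /=; first by rewrite mulr0n addr0; congr (_ *: _); ring.
rewrite !(linearZ, raddfN, raddfMn) /= -iterSr.
rewrite -mulrnA -[_ *+ (j * i.+1)]scaler_nat scalerN -scaleNr -scalerDl natrM.
by congr (_ *: _); ring.
Qed.


(** * The module Bbar *)

Local Notation B := (Bbar a d).

Lemma Bbar0 : B 0.
Proof.
by exists (fun _ _ => 0); rewrite big1 // => i _; rewrite big1 // => j _; rewrite scale0r.
Qed.

Lemma BbarD p q : B p -> B q -> B (p + q).
Proof.
move=> [c ->] [c' ->]; exists (fun i j => c i j + c' i j).
rewrite -big_split; apply: eq_bigr => i _; rewrite -big_split; apply: eq_bigr => j _.
by rewrite scalerDl.
Qed.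

Lemma BbarZ k p : B p -> B (k *: p).
Proof.
move=> [c ->]; exists (fun i j => k * c i j).
rewrite scaler_sumr; apply: eq_bigr => i _; rewrite scaler_sumr; apply: eq_bigr => j _.
by rewrite scalerA.
Qed.

Lemma Bbar_sum (I : Type) (r : seq I) (P : pred I) (F : I -> KA) :
  (forall i, P i -> B (F i)) -> B (\sum_(i <- r | P i) F i).
Proof. by move=> BF; apply: big_ind => //; [exact: Bbar0 | exact: BbarD]. Qed.

Lemma Bbar_hD13 i j : B (hD13 i j).
Proof.
have [ijd|dij] := leqP (i + j) d; last by rewrite hD13_eq0 //; exact: Bbar0.
have ffact_neq0 : (d ^_ (i + j))%:R != 0 :> K by rewrite natr_neq0 // ffact_gt0.
pose c i' j' : K := if (i', j') == (i, j) then (d ^_ (i + j))%:R else 0.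
exists c; rewrite (sum_triangle1
    (G := fun i' j' => c i' j' *: (((d ^_ (i' + j'))%:R)^-1 *: hD13 i' j')) ijd).
  by rewrite /c eqxx scalerA mulfV ?scale1r.
by move=> i' j' _ /negbTE ij'; rewrite /c ij' scale0r.
Qed.

Lemma Bbar_linear_stable (X : {linear KA -> KA}) :
  (forall i j, B (X (hD13 i j))) -> forall p, B p -> B (X p).
Proof.
move=> BX p [c ->]; rewrite linear_sum; apply: Bbar_sum => i _.
rewrite linear_sum; apply: Bbar_sum => j _.
by rewrite !linearZ; do 2 apply: BbarZ; exact: BX.
Qed.

Lemma Bbar_scale_hD13 k i j : B (k *: hD13 i j).
Proof. exact/BbarZ/Bbar_hD13. Qed.

Lemma submod_Bbar : submod B.
Proof.
split; first exact: Bbar0.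
split; first exact: BbarD.
split; first exact: BbarZ.
move=> p Bp; split; [|split; [|split; [|split; [|split; [|split; [|split]]]]]];
  apply: Bbar_linear_stable Bp => i j /=.
- by rewrite D1_hD13; apply: Bbar_scale_hD13.
- by rewrite D2_hD13 -scaler_nat; apply: Bbar_scale_hD13.
- by rewrite D3_hD13; apply: Bbar_scale_hD13.
- exact: Bbar_hD13 i.+1 j.
- by rewrite hD2_hD13 -scaler_nat; apply: Bbar_scale_hD13.
- by rewrite hD3_hD13; apply: Bbar_hD13.
- by rewrite E1_hD13; apply: Bbar_scale_hD13.
- by rewrite E2_hD13; apply: Bbar_scale_hD13.
Qed.

Lemma submod_hD13 W : submod W -> W a -> forall i j, W (hD13 i j).
Proof.
move=> [_ [_ [_ Wops]]] Wa; elim=> [|i IH] j.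
  by elim: j => [|j IHj] //; rewrite -hD3_hD13; have [_ [_ [_ [_ [_ []]]]]] := Wops _ IHj.
by rewrite -hD1_hD13; have [_ [_ [_ []]]] := Wops _ (IH j).
Qed.

Lemma submod_Bbar_sub W : submod W -> W a -> forall p, B p -> W p.
Proof.
move=> Wsub Wa p [c ->]; have [W0 [WD [WZ _]]] := Wsub.
apply: big_ind => [//|x y|i _]; first exact: WD.
apply: big_ind => [//|x y|j _]; first exact: WD.
by do 2 apply: (WZ); exact: submod_hD13.
Qed.

Lemma iter_D3_hD13 t i j : (i + j <= d)%N ->
  iter t (@D3 K n) (hD13 i j) = (j ^_ t * (d - i - j + t) ^_ t)%:R *: hD13 i (j - t).
Proof.
move=> ijd; elim: t => [|t IH] /=; first by rewrite mul1n scale1r subn0.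
rewrite IH linearZ /= D3_hD13 scalerA -natrM -subnS; congr (_%:R *: _).
have [j_lt_t|t_le_j] := ltnP j t.
  by rewrite (ffact_small j_lt_t) (ffact_small (ltn_trans j_lt_t (ltnSn t))).
rewrite ffactnSr addnS ffactSS (_ : d.+1 - _ = (d - i - j + t).+1)%N; last by lia.
by ring.
Qed.

Lemma iter_D1_hD13 s i j : (i + j <= d)%N ->
  iter s (@D1 K n) (hD13 i j) = (i ^_ s * (d - i - j + s) ^_ s)%:R *: hD13 (i - s) j.
Proof.
move=> ijd; elim: s => [|s IH] /=; first by rewrite mul1n scale1r subn0.
rewrite IH linearZ /= D1_hD13 scalerA -natrM -subnS; congr (_%:R *: _).
have [i_lt_s|s_le_i] := ltnP i s.
  by rewrite (ffact_small i_lt_s) (ffact_small (ltn_trans i_lt_s (ltnSn s))).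
rewrite ffactnSr addnS ffactSS (_ : d.+1 - _ = (d - i - j + s).+1)%N; last by lia.
by ring.
Qed.

Lemma iter_D1_D3_hD13 s t i j : (i + j <= d)%N ->
  iter s (@D1 K n) (iter t (@D3 K n) (hD13 i j)) =
  (j ^_ t * (d - i - j + t) ^_ t * (i ^_ s * (d - i - (j - t) + s) ^_ s))%:R
    *: hD13 (i - s) (j - t).
Proof.
move=> ijd; rewrite iter_D3_hD13 // linearZ /= iter_D1_hD13; last by lia.
by rewrite scalerA -natrM.
Qed.

Lemma iter_D1_D3_hD13_eq0 s t i j : (i + j <= d)%N -> (i < s)%N || (j < t)%N ->
  iter s (@D1 K n) (iter t (@D3 K n) (hD13 i j)) = 0.
Proof.
move=> ijd /orP[i_lt_s|j_lt_t]; rewrite iter_D1_D3_hD13 //.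
  by rewrite (ffact_small i_lt_s) mul0n muln0 scale0r.
by rewrite (ffact_small j_lt_t) !mul0n scale0r.
Qed.

Lemma iter_D1_D3_hD13_diag s t : (s + t <= d)%N ->
  exists2 k : K, k != 0 & iter s (@D1 K n) (iter t (@D3 K n) (hD13 s t)) = k *: a.
Proof.
move=> std; rewrite iter_D1_D3_hD13 // !subnn; eexists; last by [].
by rewrite natr_neq0 // !muln_gt0 !ffact_gt0; lia.
Qed.

Lemma a_neq0 : a != 0.
Proof. by apply: contraNneq hD1a_ord => ->; rewrite raddf0. Qed.

Lemma submod_iter_D1_D3 W s t p :
  submod W -> W p -> W (iter s (@D1 K n) (iter t (@D3 K n) p)).
Proof.
move=> [_ [_ [_ Wops]]] Wp.
have W_iter (X : KA -> KA) : (forall q, W q -> W (X q)) -> forall k q, W q -> W (iter k X q).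
  by move=> WX; elim=> //= k IH q Wq; apply/WX/IH.
apply: (W_iter _ (fun q Wq => (Wops q Wq).1)).
exact: (W_iter _ (fun q Wq => (Wops q Wq).2.2.1)).
Qed.

Lemma submod_Bbar_a W : submod W -> (forall w, W w -> B w) ->
  forall w, W w -> w != 0 -> W a.
Proof.
move=> Wsub WB w Ww w_neq0; have [c w_def] := WB w Ww; have [_ [_ [WZ _]]] := Wsub.
pose P (x : 'I_d.+1 * 'I_d.+1) := (x.1 + x.2 <= d)%N && (c x.1 x.2 != 0).
have [x0 Px0] : exists x, P x.
  apply/existsP; apply: contraNT w_neq0 => /existsPn noP.
  rewrite w_def big1 // => i _; rewrite big1 // => j ijd.
  by move: (noP (i, j)); rewrite /P /= ijd negbK => /eqP->; rewrite scale0r.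
have [[s t] /andP[/= std cst] st_max] :=
  arg_maxnP (fun x : 'I_d.+1 * 'I_d.+1 => (x.1 + x.2)%N) Px0.
pose T p := iter s (@D1 K n) (iter t (@D3 K n) p).
have [k k_neq0 T_st] := iter_D1_D3_hD13_diag std.
have Tw : T w = c s t *: (((d ^_ (s + t))%:R)^-1 *: (k *: a)).
  rewrite w_def /T !linear_sum /=.
  under eq_bigr do rewrite !linear_sum /=.
  under eq_bigr do under eq_bigr do rewrite !linearZ /=.
  rewrite (sum_triangle1 (G := fun i j => c i j *: (((d ^_ (i + j))%:R)^-1 *:
             iter s (@D1 K n) (iter t (@D3 K n) (hD13 i j)))) std) ?T_st //.
  move=> i j ijd ij_st; have [->|cij] := eqVneq (c i j) 0; first by rewrite scale0r.
  have i_lt : (i < d.+1)%N by lia.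
  have j_lt : (j < d.+1)%N by lia.
  have := st_max (Ordinal i_lt, Ordinal j_lt); rewrite /P /= ijd cij => /(_ isT) ij_le.
  rewrite iter_D1_D3_hD13_eq0 ?scaler0 //.
  by move: ij_st ij_le; rewrite xpair_eqE negb_and => /orP[] /eqP; lia.
have -> : a = (c s t * ((d ^_ (s + t))%:R)^-1 * k)^-1 *: T w.
  rewrite Tw !scalerA -!mulrA mulVf ?scale1r //.
  by rewrite !mulf_neq0 ?invr_eq0 ?natr_neq0 ?ffact_gt0.
by apply/WZ; apply: submod_iter_D1_D3 Wsub Ww.
Qed.

Lemma irred_submod_Bbar : irred_submod B.
Proof.
split; first exact: submod_Bbar.
split; first by exists a; split; [exact: Bbar_hD13 0 0 | exact: a_neq0].
move=> W Wsub WB; case: (classic (exists w, W w /\ w != 0)) => [[w [Ww w_neq0]]|noW].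
  by right; apply: submod_Bbar_sub Wsub (submod_Bbar_a Wsub WB Ww w_neq0).
by left => w Ww; have [//|w_neq0] := eqVneq w 0; case: noW; exists w.
Qed.

Definition hD13s := [seq hD13 x.1 x.2 | x : 'I_d.+1 * 'I_d.+1 <- enum {: 'I_d.+1 * 'I_d.+1}].

Lemma Bbar_spanE p : B p <-> seq_span hD13s p.
Proof.
split=> [[c ->]|[c ->]]; last first.
  apply: Bbar_sum => k _; apply: BbarZ.
  have /mapP[x _ ->] : hD13s`_k \in hD13s by apply: mem_nth.
  exact: Bbar_hD13.
apply: big_ind => [|x y|i _]; [exact: seq_span0 | exact: seq_spanD |].
apply: big_ind => [|x y|j _]; [exact: seq_span0 | exact: seq_spanD |].
do 2 apply: seq_spanZ; apply: seq_span_mem.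
by apply/mapP; exists (i, j); rewrite ?mem_enum.
Qed.

Lemma iso_Gamma_Bbar : iso_Gamma B d 0.
Proof.
split; first exact: irred_submod_Bbar.
split; first by exists hD13s; exact: Bbar_spanE.
exists a; split; [exact: Bbar_hD13 0 0 | exact: a_neq0 | by [] | exact: E1a |].
by rewrite E2a scale0r.
Qed.

(** * The Casimir element *)

Definition invfact2 i j : K := ((i`! * j`!)%:R)^-1.

Lemma invfact2S1 i j : invfact2 i.+1 j * i.+1%:R = invfact2 i j.
Proof.
rewrite /invfact2 factS !natrM; field.
by rewrite addrC natr1 !natr_neq0 ?fact_gt0.
Qed.

Lemma invfact2S2 i j : invfact2 i j.+1 * j.+1%:R = invfact2 i j.
Proof.
rewrite /invfact2 (factS j) !natrM; field.
by rewrite addrC natr1 !natr_neq0 ?fact_gt0.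
Qed.

Definition casimir_coef i j : KA := invfact2 i j *: hD13 i j.

Lemma casimir_coef_eq0 i j : (d < i + j)%N -> casimir_coef i j = 0.
Proof. by move=> dij; rewrite /casimir_coef hD13_eq0 // scaler0. Qed.

Lemma hD1_casimir_coef i j : hD1 (casimir_coef i j) = casimir_coef i.+1 j *+ i.+1.
Proof. by rewrite linearZ -scaler_nat scalerA mulrC invfact2S1. Qed.

Lemma hD3_casimir_coef i j : hD3 (casimir_coef i j) = casimir_coef i j.+1 *+ j.+1.
Proof. by rewrite linearZ /= hD3_hD13 -scaler_nat scalerA mulrC invfact2S2. Qed.

Lemma hD2_casimir_coefS i j : hD2 (casimir_coef i.+1 j) = casimir_coef i j.+1 *+ j.+1.
Proof.
rewrite linearZ /= hD2_hD13 -!scaler_nat !scalerA; congr (_ *: _).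
by rewrite invfact2S1 mulrC invfact2S2.
Qed.

Lemma hD2_casimir_coef0 j : hD2 (casimir_coef 0 j) = 0.
Proof. by rewrite linearZ /= hD2_hD13 mulr0n scaler0. Qed.

Lemma D1_casimir_coefS i j : D1 (casimir_coef i.+1 j) = casimir_coef i j *+ (d - (i + j)).
Proof.
rewrite linearZ /= D1_hD13 -!scaler_nat !scalerA natrM mulrA invfact2S1.
by rewrite addSn subSS mulrC.
Qed.

Lemma D1_casimir_coef0 j : D1 (casimir_coef 0 j) = 0.
Proof. by rewrite linearZ /= D1_hD13 mul0n scale0r scaler0. Qed.

Lemma D2_casimir_coefS i j : D2 (casimir_coef i j.+1) = casimir_coef i.+1 j *+ i.+1.
Proof.
rewrite linearZ /= D2_hD13 -!scaler_nat !scalerA; congr (_ *: _).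
by rewrite invfact2S2 mulrC invfact2S1.
Qed.

Lemma D2_casimir_coef0 i : D2 (casimir_coef i 0) = 0.
Proof. by rewrite linearZ /= D2_hD13 mulr0n scaler0. Qed.

Lemma D3_casimir_coefS i j : D3 (casimir_coef i j.+1) = casimir_coef i j *+ (d - (i + j)).
Proof.
rewrite linearZ /= D3_hD13 -!scaler_nat !scalerA natrM mulrA invfact2S2.
by rewrite addnS subSS mulrC.
Qed.

Lemma D3_casimir_coef0 i : D3 (casimir_coef i 0) = 0.
Proof. by rewrite linearZ /= D3_hD13 mul0n scale0r scaler0. Qed.

Lemma E1_casimir_coef i j :
  E1 (casimir_coef i j) = (d%:R - j%:R - i%:R *+ 2) *: casimir_coef i j.
Proof. by rewrite linearZ /= E1_hD13 !scalerA mulrC. Qed.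

Lemma E2_casimir_coef i j : E2 (casimir_coef i j) = (i%:R - j%:R) *: casimir_coef i j.
Proof. by rewrite linearZ /= E2_hD13 !scalerA mulrC. Qed.

Lemma casimirE : casimir a d = \sum_(i < d.+1) \sum_(j < d.+1 | (i + j <= d)%N)
  casimir_coef i j *: 'X_[U_(o0) *+ (d - (i + j)) + U_(o1) *+ i + U_(o2) *+ j]%MM.
Proof.
apply: eq_bigr => i _; apply: eq_bigr => j _.
by rewrite /x1 /x2 /x3 !mpolyXn -!mpolyXD.
Qed.

Lemma mcoeff_casimir m : (casimir a d)@_m =
  if (m o0 + m o1 + m o2 == d)%N then casimir_coef (m o1) (m o2) else 0.
Proof.
rewrite casimirE !raddf_sum /=.
under eq_bigr do rewrite raddf_sum /=.
under eq_bigr do under eq_bigr do rewrite mcoeffZ mcoeffX mnm3_eqE.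
have [m12d|dm12] := leqP (m o1 + m o2) d.
  rewrite (sum_triangle1 (G := fun i j => casimir_coef i j *
    ([&& m o0 == d - (i + j), m o1 == i & m o2 == j]%N)%:R) m12d).
    by rewrite !eqxx !andbT; case: eqP => m0; case: eqP => md;
      rewrite ?mulr1 ?mulr0 //; lia.
  move=> i j _; case: and3P => [[_ /eqP-> /eqP->]|_]; last by rewrite mulr0.
  by rewrite eqxx.
rewrite big1 => [|i _]; last first.
  rewrite big1 // => j ijd.
by case: and3P => [[_ /eqP mi /eqP mj]|_]; rewrite ?mulr0 //; lia.
by case: eqP => // md; lia.
Qed.

Lemma casimir_homog : casimir a d \is d.-homog.
Proof.
apply/dhomogP => m; rewrite mcoeff_msupp mcoeff_casimir.
case: (m o0 + m o1 + m o2 =P d)%N => [md _|_]; last by rewrite eqxx.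
by apply: etrans (mdegE m) _; rewrite big_ord3.
Qed.

(* Reduces a covariance identity to an identity between the coefficients
   [casimir_coef] indexed by the exponents (m0, m1, m2) of x1, x2, x3. *)
Local Ltac casimir_coef_eq :=
  apply/mpolyP; let m := fresh "m" in intro m;
  rewrite mcoeff0 mcoeff_derAx big_ord3 /x1 /x2 /x3 /= ?mulr0 ?addr0 ?add0r ?mulrN
          ?mcoeffD ?mcoeffN ?mcoeff_mderivMX ?mcoeff_casimir ?mnmDE ?mnmBE ?mnm1E /=;
  move: (m o0) (m o1) (m o2); clear m => m0 m1 m2; rewrite ?subn0 ?addn0.

Local Ltac split_degree := repeat (case: eqP => ?); try lia.

Lemma D1x_casimir : D1x (casimir a d) = 0.
Proof.
casimir_coef_eq; rewrite -[derA (gD1 K n)]/(@D1 K n).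
case: m1 => [|m1] /=; first by case: eqP; rewrite ?D1_casimir_coef0 ?raddf0 addr0.
rewrite ?subn1 ?addn1 /=; split_degree; last by rewrite raddf0 mul0rn subrr.
by rewrite D1_casimir_coefS (_ : d - (m1 + m2) = m0.+1)%N ?subrr //; lia.
Qed.

Lemma D2x_casimir : D2x (casimir a d) = 0.
Proof.
casimir_coef_eq; rewrite -[derA (gD2 K n)]/(@D2 K n).
case: m2 => [|m2] /=; first by case: eqP; rewrite ?D2_casimir_coef0 ?raddf0 addr0.
rewrite ?subn1 ?addn1 /=; split_degree; last by rewrite raddf0 mul0rn subrr.
by rewrite D2_casimir_coefS subrr.
Qed.

Lemma D3x_casimir : D3x (casimir a d) = 0.
Proof.
casimir_coef_eq; rewrite -[derA (gD3 K n)]/(@D3 K n).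
case: m2 => [|m2] /=; first by case: eqP; rewrite ?D3_casimir_coef0 ?raddf0 addr0.
rewrite ?subn1 ?addn1 /=; split_degree; last by rewrite raddf0 mul0rn subrr.
by rewrite D3_casimir_coefS (_ : d - (m1 + m2) = m0.+1)%N ?subrr //; lia.
Qed.

Lemma hD1x_casimir : hD1x (casimir a d) = 0.
Proof.
casimir_coef_eq; rewrite -[derA (gH1 K n)]/(@hD1 K n).
case: m0 => [|m0] /=.
  split_degree; last by rewrite raddf0 subr0.
  by rewrite hD1_casimir_coef casimir_coef_eq0 ?mul0rn ?subr0 //; lia.
rewrite ?subn1 ?addn1 /=; split_degree; last by rewrite raddf0 mul0rn subrr.
by rewrite hD1_casimir_coef subrr.
Qed.

Lemma hD2x_casimir : hD2x (casimir a d) = 0.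
Proof.
casimir_coef_eq; rewrite -[derA (gH2 K n)]/(@hD2 K n).
case: m1 => [|m1] /=; first by case: eqP; rewrite ?hD2_casimir_coef0 ?raddf0 addr0.
rewrite ?subn1 ?addn1 /=; split_degree; last by rewrite raddf0 mul0rn subrr.
by rewrite hD2_casimir_coefS subrr.
Qed.

Lemma hD3x_casimir : hD3x (casimir a d) = 0.
Proof.
casimir_coef_eq; rewrite -[derA (gH3 K n)]/(@hD3 K n).
case: m0 => [|m0] /=.
  split_degree; last by rewrite raddf0 subr0.
  by rewrite hD3_casimir_coef casimir_coef_eq0 ?mul0rn ?subr0 //; lia.
rewrite ?subn1 ?addn1 /=; split_degree; last by rewrite raddf0 mul0rn subrr.
by rewrite hD3_casimir_coef subrr.
Qed.

Lemma E1x_casimir : E1x (casimir a d) = 0.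
Proof.
apply/mpolyP => m; rewrite mcoeff0 mcoeff_derAx big_ord3 /= /x1 /x2 mulr0 addr0 mulrN.
rewrite !mcoeffD mcoeffN !mcoeff_mderivMX_diag mcoeff_casimir -[derA (gE1 K n)]/(@E1 K n).
case: eqP => [md|_]; last by rewrite raddf0 ?mul0rn ?oppr0 !addr0.
rewrite E1_casimir_coef -!scaler_nat -scaleNr -!scalerDl.
by apply/eqP; rewrite scaler_eq0 -md !natrD; apply/orP; left; apply/eqP; ring.
Qed.

Lemma E2x_casimir : E2x (casimir a d) = 0.
Proof.
apply/mpolyP => m; rewrite mcoeff0 mcoeff_derAx big_ord3 /= /x2 /x3 mulr0 add0r mulrN.
rewrite !mcoeffD mcoeffN !mcoeff_mderivMX_diag mcoeff_casimir -[derA (gE2 K n)]/(@E2 K n).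
case: eqP => [md|_]; last by rewrite raddf0 ?mul0rn ?oppr0 !addr0.
rewrite E2_casimir_coef -!scaler_nat -scaleNr -!scalerDl.
by apply/eqP; rewrite scaler_eq0; apply/orP; left; apply/eqP; ring.
Qed.

Lemma covariant_casimir : covariant d (casimir a d).
Proof.
split; first exact: casimir_homog.
by rewrite D1x_casimir D2x_casimir D3x_casimir hD1x_casimir hD2x_casimir hD3x_casimir
  E1x_casimir E2x_casimir.
Qed.

End HighestWeightVector.

Unset Implicit Arguments.

Theorem mainTheorem5 (K : fieldType) (charK0 : [pchar K] =i pred0)
    (n : nat) (n_ge1 : (1 <= n)%N) (d : nat) (a : KA K n)
    (a_homog : exists da : nat, a \is da.-homog)
    (a_isobaric : isobaric a)
    (a_inv : UTinv a)
    (a_irr : UTirred a)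
    (a_ord1 : has_ord (hD1 (n:=n)) a d)
    (a_ord2 : has_ord (hD2 (n:=n)) a 0) :
  iso_Gamma (Bbar a d) d 0 /\ covariant d (casimir a d).
Proof.
have [_ [lam [_ [E1a _]]]] := a_isobaric.
have [D1a [D2a D3a]] := a_inv.
have [hD1a_ord hD1a_vanish] := a_ord1.
have hD1a_ord1 := hD1a_vanish d.+1 (ltnSn d).
have hD2a : hD2 a = 0 := a_ord2.2 1 isT.
by split; [apply: iso_Gamma_Bbar | apply: covariant_casimir]; eassumption.
Qed.
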